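(* For every NFA $\mathcal A$, the relation $S(\supseteq^{\mathrm{fw}},\subseteq^{\mathrm{fw}})$ is good for saturation, i.e. $\mathcal L(\mathrm{Sat}(\mathcal A,S(\supseteq^{\mathrm{fw}},\subseteq^{\mathrm{fw}})))=\mathcal L(\mathcal A)$.
   Context: An NFA $\mathcal A=(\Sigma,Q,I,F,\delta)$, $\delta\subseteq Q\times\Sigma\times Q$; its language is the set of finite words with a finite trace starting in $I$ and ending in $F$. Forward finite trace inclusion: $p\subseteq^{\mathrm{fw}}q$ iff for every finite word $w$, if some $w$-trace from $p$ ends in $F$ then some $w$-trace from $q$ ends in $F$; $\supseteq^{\mathrm{fw}}$ is its inverse. Let $\Delta=Q\times\Sigma\times Q$; $S(R_b,R_f)=\{((p,\sigma,r),(p',\sigma,r'))\in\Delta\times\Delta:p\,R_b\,p',\ r\,R_f\,r'\}$. For reflexive $S\subseteq\Delta\times\Delta$, $\mathrm{Sat}(\mathcal A,S)=(\Sigma,Q,I,F,\{t'\in\Delta:\exists t\in\delta,(t',t)\in S\})$. *)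

From mathcomp Require Import all_boot.
Set Implicit Arguments. Unset Strict Implicit. Unset Printing Implicit Defensive.

(* Components are Prop-valued so that Sat (whose transition relation is
   defined via forward trace inclusion, a property quantifying over all
   words) is again an NFA of the same kind. *)
Record NFA (Sig Q : finType) := MkNFA {
  ini : Q -> Prop;
  fin : Q -> Prop;
  delta : Q -> Sig -> Q -> Prop }.

Section NFADefs.
Variables (Sig Q : finType).

Fixpoint accepts (A : NFA Sig Q) (p : Q) (w : seq Sig) : Prop :=
  match w with
  | [::] => fin A p
  | a :: w' => exists q, delta A p a q /\ accepts A q w'
  end.

Definition lang (A : NFA Sig Q) (w : seq Sig) : Prop :=
  exists p, ini A p /\ accepts A p w.

Definition fw_incl (A : NFA Sig Q) (p q : Q) : Prop :=
  forall w, accepts A p w -> accepts A q w.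
Definition fw_sup (A : NFA Sig Q) (p q : Q) : Prop := fw_incl A q p.

(* Transitions Delta = Q x Sigma x Q, encoded as ((p, sigma), r). *)
Definition transition := (Q * Sig * Q)%type.

Definition S_rel (Rb Rf : Q -> Q -> Prop) (t t' : transition) : Prop :=
  t.1.2 = t'.1.2 /\ Rb t.1.1 t'.1.1 /\ Rf t.2 t'.2.

Definition Sat (A : NFA Sig Q) (S : transition -> transition -> Prop) : NFA Sig Q :=
  MkNFA (ini A) (fin A)
    (fun p s r => exists t : transition,
        delta A t.1.1 t.1.2 t.2 /\ S (p, s, r) t).

End NFADefs.

From mathcomp Require Import all_boot.

Set Implicit Arguments.
Unset Strict Implicit.

(* Completeness holds because [Sat] only adds transitions ([S] is reflexive).
   Soundness: a saturated transition (p, a, r) comes from some (p', a, r') of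
   [A] with p' ⊆fw p and r ⊆fw r'; by induction r accepts the rest of the word
   in [A], hence so does r', so p' accepts the whole word, hence so does p. *)

Section Saturation.
Variables (Sig Q : finType) (A : NFA Sig Q).

Lemma accepts_mono (B : NFA Sig Q) :
  (forall p, fin A p -> fin B p) ->
  (forall p a r, delta A p a r -> delta B p a r) ->
  forall w p, accepts A p w -> accepts B p w.
Proof.
move=> finAB deltaAB; elim=> [|a w IHw] p /=; first exact: finAB.
by move=> [r [pr rw]]; exists r; split; [apply: deltaAB | apply: IHw].
Qed.

Lemma delta_Sat_refl (S : transition Sig Q -> transition Sig Q -> Prop) :
  (forall t, S t t) -> forall p a r, delta A p a r -> delta (Sat A S) p a r.
Proof. by move=> S_refl p a r par; exists (p, a, r). Qed.

Lemma accepts_Sat_complete (Rb Rf : Q -> Q -> Prop) :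
  (forall p, Rb p p) -> (forall r, Rf r r) ->
  forall w p, accepts A p w -> accepts (Sat A (S_rel Rb Rf)) p w.
Proof.
move=> Rb_refl Rf_refl; apply: accepts_mono => // p a r.
by apply: delta_Sat_refl => t; split; [|split].
Qed.

Lemma accepts_Sat_sound (Rb Rf : Q -> Q -> Prop) :
  (forall p p', Rb p p' -> fw_sup A p p') ->
  (forall r r', Rf r r' -> fw_incl A r r') ->
  forall w p, accepts (Sat A (S_rel Rb Rf)) p w -> accepts A p w.
Proof.
move=> Rb_sup Rf_incl; elim=> [|a w IHw] p //=.
move=> [r [[[[p' a'] r'] [p'a'r' [/= -> [pp' rr']]]] rw]].
apply: (Rb_sup _ _ pp' (a' :: w)); exists r'; split=> //.
exact/(Rf_incl _ _ rr')/IHw.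
Qed.

End Saturation.

Theorem theorem10p7 (Sig Q : finType) (A : NFA Sig Q) :
  forall w : seq Sig,
    lang (Sat A (S_rel (fw_sup A) (fw_incl A))) w <-> lang A w.
Proof.
move=> w; split=> -[p [ip pw]]; exists p; split=> //.
- exact: (accepts_Sat_sound (fun _ _ => id) (fun _ _ => id) pw).
- exact: (accepts_Sat_complete (Rb := fw_sup A) (Rf := fw_incl A)
           (fun _ _ => id) (fun _ _ => id) pw).
Qed.
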